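(* Let $2\sqrt2-2<a\le1$ and $f_a(z)=z\big(z^2+(a-2)z+1-2a\big)$. Define subintervals of $[-a,2]$: $$I_1=\Big[-a,\tfrac{2-a-\sqrt{a^2+4a}}2\Big],\ I_2=\Big[\tfrac{2-a-\sqrt{a^2+4a}}2,0\Big],\ I_3=[0,0.25],\ I_4=\Big[0.25,\tfrac{2-a+\sqrt{a^2+4a}}2\Big],\ I_5=\Big[\tfrac{2-a+\sqrt{a^2+4a}}2,2\Big].$$ Then (i) $f_a(I_1)=I_1\cup I_2$, $f_a(I_4)=I_1\cup I_2$, and $f_a(I_5)=I_3\cup I_4\cup I_5$; (ii) $f_a(I_2)\subseteq I_3$ and $f_a(I_3)\subseteq I_2$.
   Context: For a set $S$, $f(S)=\{f(x):x\in S\}$. *)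

From HB Require Import structures.
From mathcomp Require Import all_boot all_order all_algebra.
From mathcomp Require Import all_classical all_reals.
Set Implicit Arguments. Unset Strict Implicit. Unset Printing Implicit Defensive.
Import Order.TTheory GRing.Theory Num.Theory.
Local Open Scope ring_scope.

Definition fa (R : realType) (a z : R) : R :=
  z * (z ^+ 2 + (a - 2) * z + 1 - 2 * a).

(* the nonzero roots of f_a: (2 - a -/+ sqrt(a^2 + 4a)) / 2 *)
Definition rootm (R : realType) (a : R) : R := (2 - a - Num.sqrt (a ^+ 2 + 4 * a)) / 2.
Definition rootp (R : realType) (a : R) : R := (2 - a + Num.sqrt (a ^+ 2 + 4 * a)) / 2.

From HB Require Import structures.
From mathcomp Require Import all_boot all_order all_algebra.
From mathcomp Require Import all_classical all_reals.
From mathcomp Require Import polyrcf ring lra.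
Set Implicit Arguments. Unset Strict Implicit. Unset Printing Implicit Defensive.
Import Order.TTheory GRing.Theory Num.Theory.
Local Open Scope ring_scope.
Local Open Scope classical_set_scope.

(* f_a(z) + a = (z + a)(z - 1)^2 and f_a(z) - 2 = (z - 2)(z^2 + a z + 1), so f_a maps
   [-a, 2] into itself, and f_a(z) = z (z - m)(z - p) with m = rootm a <= 0 < 1 <= p = rootp a
   fixes the sign of f_a on each I_k.  Since f_a(-a) = f_a(1) = -a, f_a(m) = f_a(p) = 0 and
   f_a(2) = 2, the intermediate value theorem gives the three images in (i).  For (ii),
   f_a <= 1/4 on z <= 0 as soon as a <= 1, and f_a >= -a/2 on [0, 1/4]; the hypothesis
   2 sqrt 2 - 2 < a says exactly a^2 + 4a > 4, i.e. m < -a/2. *)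

Lemma set_itvcc_setU d (T : orderType d) (x y w : T) : (x <= y)%O -> (y <= w)%O ->
  `[x, y] `|` `[y, w] = `[x, w].
Proof.
move=> xy yw; apply/seteqP; split => t /=; rewrite !in_itv /=.
- case=> /andP[xt tw]; apply/andP; split=> //.
  + exact: le_trans tw yw.
  + exact: le_trans xy xt.
- move=> /andP[xt tw]; case: (leP t y) => ty; [left | right]; apply/andP; split=> //.
  exact: ltW.
Qed.

Lemma poly_image_itv (R : rcfType) (p : {poly R}) (l u c d x y : R) :
  l <= x <= u -> l <= y <= u -> p.[x] = c -> p.[y] = d ->
  (forall z, l <= z <= u -> c <= p.[z] <= d) ->
  horner p @` `[l, u] = `[c, d].
Proof.
move=> /andP[lx xu] /andP[ly yu] px py p_bnd; apply/seteqP; split.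
  by move=> _ [z + <-]; rewrite /= !in_itv /=; exact: p_bnd.
move=> t /=; rewrite in_itv /= => /andP[ct td].
pose q := p - t%:P.
have qE v : q.[v] = p.[v] - t by rewrite hornerD hornerN hornerC.
have q_sign : q.[x] * q.[y] <= 0 by rewrite !qE px py mulr_le0_ge0 ?subr_le0 ?subr_ge0.
have [v [w [[lv vw wu] qvw]]] :
    exists v w, [/\ l <= v, v <= w & w <= u] /\ q.[v] * q.[w] <= 0.
  case: (leP x y) => xy; [exists x, y | exists y, x; rewrite mulrC].
  - by split; first split.
  - by split=> //; split=> //; exact: ltW.
have [z] := polyrcf.poly_ivt vw qvw; rewrite in_itv /= => /andP[vz zw] /rootP.
rewrite qE => /eqP; rewrite subr_eq0 => /eqP pz.
by exists z; rewrite // in_itv /= (le_trans lv vz) (le_trans zw wu).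
Qed.

Section CubicMap.
Variable R : realType.
Implicit Types a z : R.

Lemma fa_horner a : fa a = horner ('X * ('X ^+ 2 + (a - 2)%:P * 'X + (1 - 2 * a)%:P)).
Proof. by apply/funext => z; rewrite /fa !hornerE. Qed.

Lemma fa_image_itv a l u c d x y :
  l <= x <= u -> l <= y <= u -> fa a x = c -> fa a y = d ->
  (forall z, l <= z <= u -> c <= fa a z <= d) ->
  fa a @` `[l, u] = `[c, d].
Proof. rewrite fa_horner; exact: poly_image_itv. Qed.

Lemma fa_oppa a : fa a (- a) = - a. Proof. by rewrite /fa; ring. Qed.
Lemma fa1 a : fa a 1 = - a. Proof. by rewrite /fa; ring. Qed.
Lemma fa2 a : fa a 2 = 2. Proof. by rewrite /fa; ring. Qed.

Lemma fa_ge a z : - a <= z -> - a <= fa a z.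
Proof.
have fa_addE : fa a z + a = (z + a) * (z - 1) ^+ 2 by rewrite /fa; ring.
by move=> az; rewrite -subr_ge0 opprK fa_addE mulr_ge0 ?sqr_ge0 // -(opprK a) subr_ge0.
Qed.

Lemma fa_le2 a z : a ^+ 2 <= 4 -> z <= 2 -> fa a z <= 2.
Proof.
have fa_subE : fa a z - 2 = (z - 2) * ((z + a / 2) ^+ 2 + (4 - a ^+ 2) / 4).
  by rewrite /fa; field.
move=> a2 z2; rewrite -subr_le0 fa_subE mulr_le0_ge0 ?subr_le0 //.
by apply: addr_ge0; [exact: sqr_ge0 | apply: divr_ge0; lra].
Qed.

Lemma fa_le_quarter a z : a <= 1 -> z <= 0 -> fa a z <= 1 / 4.
Proof.
have fa_quarterE : fa a z - 1 / 4 = z ^+ 3 - (z + 1 / 2) ^+ 2 + (a - 1) * (z ^+ 2 - 2 * z).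
  by rewrite /fa; field.
move=> a1 z0; rewrite -subr_le0 fa_quarterE.
have : z ^+ 3 <= 0 by rewrite exprS mulr_le0_ge0 ?sqr_ge0.
have : (a - 1) * (z ^+ 2 - 2 * z) <= 0 by rewrite mulr_le0_ge0 ?subr_le0 //; nra.
have := sqr_ge0 (z + 1 / 2); lra.
Qed.

Lemma fa_ge_neg_half a z : 0 <= a -> 0 <= z <= 1 / 4 -> - (a / 2) <= fa a z.
Proof. move=> a0 /andP[z0 z4]; rewrite /fa; nra. Qed.

End CubicMap.
Section Roots.
Variables (R : realType) (a : R).
Hypothesis a_ge0 : 0 <= a.

Local Notation s := (Num.sqrt (a ^+ 2 + 4 * a)).

Let sqr_s : s ^+ 2 = a ^+ 2 + 4 * a.
Proof. by rewrite sqr_sqrtr // addr_ge0 ?sqr_ge0 ?mulr_ge0. Qed.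

Let s_bounds : a <= s <= a + 2.
Proof. by move: a_ge0 (sqrtr_ge0 (a ^+ 2 + 4 * a)) sqr_s => *; apply/andP; split; nra. Qed.

Lemma fa_factor z : fa a z = z * (z - rootm a) * (z - rootp a).
Proof.
rewrite /rootm /rootp.
have -> : z * (z - (2 - a - s) / 2) * (z - (2 - a + s) / 2) =
          z * ((z - (2 - a) / 2) ^+ 2 - s ^+ 2 / 4) by field.
by rewrite sqr_s /fa; field.
Qed.

Lemma fa_rootm : fa a (rootm a) = 0. Proof. by rewrite fa_factor subrr mulr0 mul0r. Qed.
Lemma fa_rootp : fa a (rootp a) = 0. Proof. by rewrite fa_factor subrr mulr0. Qed.

Lemma rootm_ge : - a <= rootm a. Proof. by move: s_bounds; rewrite /rootm; lra. Qed.
Lemma rootp_ge1 : 1 <= rootp a. Proof. by move: s_bounds; rewrite /rootp; lra. Qed.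
Lemma rootp_le2 : rootp a <= 2. Proof. by move: s_bounds; rewrite /rootp; lra. Qed.

Hypothesis a_gt : 2 * Num.sqrt 2 - 2 < a.

Lemma rootm_lt_half : rootm a < - (a / 2).
Proof.
have sqr_sqrt2 : Num.sqrt 2 ^+ 2 = 2 :> R by rewrite sqr_sqrtr.
have disc_gt4 : 4 < a ^+ 2 + 4 * a by move: a_gt (sqrtr_ge0 (2 : R)) sqr_sqrt2; nra.
have : 2 < s by move: disc_gt4 (sqrtr_ge0 (a ^+ 2 + 4 * a)) sqr_s; nra.
by rewrite /rootm; lra.
Qed.

Lemma rootm_le0 : rootm a <= 0.
Proof. by move: rootm_lt_half a_ge0; lra. Qed.

Lemma fa_le0_before_rootm z : z <= rootm a -> fa a z <= 0.
Proof.
move: rootm_le0 rootp_ge1 => m0 p1 zm.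
by rewrite fa_factor -mulrA mulr_le0_ge0 ?mulr_le0 ?subr_le0 //; lra.
Qed.

Lemma fa_ge0_rootm_0 z : rootm a <= z <= 0 -> 0 <= fa a z.
Proof.
move: rootp_ge1 => p1 /andP[mz z0].
by rewrite fa_factor -mulrA mulr_le0 ?mulr_ge0_le0 ?subr_ge0 ?subr_le0 //; lra.
Qed.

Lemma fa_le0_0_rootp z : 0 <= z <= rootp a -> fa a z <= 0.
Proof.
move: rootm_le0 => m0 /andP[z0 zp].
by rewrite fa_factor -mulrA mulr_ge0_le0 ?mulr_ge0_le0 ?subr_ge0 ?subr_le0 //; lra.
Qed.

Lemma fa_ge0_after_rootp z : rootp a <= z -> 0 <= fa a z.
Proof.
move: rootm_le0 rootp_ge1 => m0 p1 pz.
by rewrite fa_factor mulr_ge0 ?mulr_ge0 ?subr_ge0 //; lra.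
Qed.

End Roots.

Lemma two_sqrt2_sub2_gt0 (R : realType) : 0 < 2 * Num.sqrt 2 - 2 :> R.
Proof.
have : 1 < Num.sqrt 2 :> R by rewrite -[X in X < _]sqrtr1 ltr_sqrt ?ltr1n.
by lra.
Qed.

Theorem lemma7 (R : realType) (a : R) :
  2 * Num.sqrt 2 - 2 < a -> a <= 1 ->
  let I1 := `[- a, rootm a]%classic in
  let I2 := `[rootm a, 0]%classic in
  let I3 := `[0, 1 / 4]%classic in
  let I4 := `[1 / 4, rootp a]%classic in
  let I5 := `[rootp a, 2]%classic in
  [/\ fa a @` I1 = I1 `|` I2,
      fa a @` I4 = I1 `|` I2,
      fa a @` I5 = I3 `|` I4 `|` I5,
      fa a @` I2 `<=` I3 &
      fa a @` I3 `<=` I2].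
Proof.
move=> a_gt a_le1 I1 I2 I3 I4 I5.
have a_ge0 : 0 <= a by move: a_gt (two_sqrt2_sub2_gt0 R); lra.
move: (rootm_ge a_ge0) (rootm_lt_half a_ge0 a_gt) (rootp_ge1 a_ge0) (rootp_le2 a_ge0)
  => am ma p1 p2.
have I12 : I1 `|` I2 = `[- a, 0] by apply: set_itvcc_setU; lra.
have I345 : I3 `|` I4 `|` I5 = `[0, 2] by rewrite !set_itvcc_setU //; lra.
split; rewrite ?I12 ?I345.
- apply: (fa_image_itv (x := - a) (y := rootm a)); rewrite ?fa_oppa ?fa_rootm //; try lra.
  move=> z /andP[az zm]; rewrite fa_ge // fa_le0_before_rootm //.
- apply: (fa_image_itv (x := 1) (y := rootp a)); rewrite ?fa1 ?fa_rootp //; try lra.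
  move=> z /andP[qz zp]; rewrite fa_ge ?fa_le0_0_rootp //; lra.
- apply: (fa_image_itv (x := rootp a) (y := 2)); rewrite ?fa_rootp ?fa2 //; try lra.
  move=> z /andP[pz z2]; rewrite fa_ge0_after_rootp ?fa_le2 //; nra.
- move=> _ [z + <-]; rewrite /I2 /I3 /= !in_itv /= => /andP[mz z0].
  by rewrite fa_ge0_rootm_0 ?mz ?fa_le_quarter.
- move=> _ [z + <-]; rewrite /I2 /I3 /= !in_itv /= => /andP[z0 z4].
  rewrite fa_le0_0_rootp ?z0 ?andbT //; last lra.
  by move: (fa_ge_neg_half a_ge0 (z := z)); rewrite z0 z4 /=; lra.
Qed.
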